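(* Let $n\ge 4$ and $2\le t\le n-2$. If all of the following hold: (i) $\mathsf{var}(W_1(t))\,\mathsf{var}(W_2(t))\ne \mathsf{cov}(W_1(t),W_2(t))^2$; (ii) $\mathsf{var}(D_1(t))\,\mathsf{var}(D_2(t))\ne \mathsf{cov}(D_1(t),D_2(t))^2$; (iii) $\mathsf{var}(D_1(t)+D_2(t))\ne 0$; (iv) $\mathsf{var}(W_1(t)+W_2(t))\ne 0$, then the covariance matrix $\Sigma(t)=\mathsf{var}(\vec a(t))$ is invertible, so that the statistic $S(t)$ is well defined.
   Context: Let $G_1,\dots,G_n$ be a sequence of observations (networks) and let $K_1,K_2$ be two real symmetric $n\times n$ kernel matrices computed from this sequence, with $(i,j)$ entry $k_{xij}$ of $K_x$, $x\in\{1,2\}$. The permutation null distribution assigns probability $1/n!$ to each of the $n!$ permutations of the sequence, i.e. the kernel matrices $K_x$ are replaced by $(k_{x\pi(i)\pi(j)})_{i,j}$ for a uniformly random permutation $\pi$ of $\{1,\dots,n\}$ (the same $\pi$ for both kernels); $\mathsf{E},\mathsf{var},\mathsf{cov}$ denote expectation, variance and covariance under this distribution. For $x\in\{1,2\}$ define \[ \alpha_x(t)=\frac{1}{t(t-1)}\sum_{i=1}^n\sum_{j\ne i}k_{xij}\mathbb{1}\{i,j\le t\},\qquad \beta_x(t)=\frac{1}{(n-t)(n-t-1)}\sum_{i=1}^n\sum_{j\ne i}k_{xij}\mathbb{1}\{i,j> t\}, \] \[ W_x(t)=\frac{t}{n}\alpha_x(t)+\frac{n-t}{n}\beta_x(t),\qquad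 D_x(t)=\frac{t(t-1)}{n(n-1)}\alpha_x(t)-\frac{(n-t)(n-t-1)}{n(n-1)}\beta_x(t). \] Let $\vec a(t)=[\alpha_1(t),\beta_1(t),\alpha_2(t),\beta_2(t)]^{\mathsf T}$, $\Sigma(t)=\mathsf{var}(\vec a(t))$, and \[ S(t)=[\vec a(t)-\mathsf{E}\vec a(t)]^{\mathsf T}\Sigma(t)^{-1}[\vec a(t)-\mathsf{E}\vec a(t)]. \] *)

From mathcomp Require Import all_boot all_order all_algebra.
From mathcomp Require Import fingroup perm.
Set Implicit Arguments. Unset Strict Implicit. Unset Printing Implicit Defensive.
Import Order.TTheory GRing.Theory Num.Theory.
Local Open Scope ring_scope.

Section Defs.
Variable R : realFieldType.
Variable n : nat.

Definition Eperm (f : 'S_n -> R) : R := (n`!%:R)^-1 * \sum_(s : 'S_n) f s.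
Definition covp (f g : 'S_n -> R) : R :=
  Eperm (fun s => (f s - Eperm f) * (g s - Eperm g)).
Definition varp (f : 'S_n -> R) : R := covp f f.

Definition permute_kernel (K : 'M[R]_n) (s : 'S_n) : 'M[R]_n :=
  \matrix_(i, j) K (s i) (s j).

(* Indices are 0-based: the paper's i <= t becomes (i : 'I_n) < t. *)
Definition alpha (K : 'M[R]_n) (t : nat) : R :=
  ((t * (t - 1))%:R)^-1 *
  \sum_(i < n) \sum_(j < n | j != i) K i j * ((i < t)%N && (j < t)%N)%:R.
Definition beta (K : 'M[R]_n) (t : nat) : R :=
  (((n - t) * (n - t - 1))%:R)^-1 *
  \sum_(i < n) \sum_(j < n | j != i) K i j * ((t <= i)%N && (t <= j)%N)%:R.
Definition Wstat (K : 'M[R]_n) (t : nat) : R :=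
  t%:R / n%:R * alpha K t + (n - t)%:R / n%:R * beta K t.
Definition Dstat (K : 'M[R]_n) (t : nat) : R :=
  (t * (t - 1))%:R / (n * (n - 1))%:R * alpha K t
  - ((n - t) * (n - t - 1))%:R / (n * (n - 1))%:R * beta K t.

Definition avec (K1 K2 : 'M[R]_n) (t : nat) (s : 'S_n) : 'cV[R]_4 :=
  \col_(k < 4)
    match val k with
    | 0 => alpha (permute_kernel K1 s) t
    | 1 => beta (permute_kernel K1 s) t
    | 2 => alpha (permute_kernel K2 s) t
    | _ => beta (permute_kernel K2 s) t
    end.

Definition Sigma (K1 K2 : 'M[R]_n) (t : nat) : 'M[R]_4 :=
  \matrix_(k, l) covp (fun s => avec K1 K2 t s k ord0) (fun s => avec K1 K2 t s l ord0).

End Defs.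

(* Sigma(t) is the permutation Gram matrix of alpha_1, beta_1, alpha_2, beta_2, so it
   suffices that a combination X of them uncorrelated with all four is trivial.
   Since W = (t/n) alpha + ((n-t)/n) beta and D = r alpha - u beta with r, u > 0, each
   pair (alpha_x, beta_x) spans the same space as (W_x, D_x), so
   X = c1 W1 + c2 W2 + d1 D1 + d2 D2.  The key fact is that every W_x is uncorrelated
   with every D_y: W is an off-diagonal sum of w_ij k_(s i)(s j) whose weight matrix
   has constant row and column sums, D is a combination of the single-site statistics
   phi(s k) = sum_(b <> s k) (k_(s k) b + k_b (s k)), and by exchangeability
   cov(k_(s i)(s j), phi(s k)) only depends on whether k equals i, j or neither,
   while it sums to zero over k.  Hence X uncorrelated with W1, W2 forces c1 = c2 = 0
   by (i), and likewise d1 = d2 = 0 by (ii). *)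

From mathcomp Require Import all_boot all_order all_algebra.
From mathcomp Require Import fingroup perm action alt primitive_action.
From mathcomp Require Import ring zify.
Set Implicit Arguments. Unset Strict Implicit. Unset Printing Implicit Defensive.
Import Order.TTheory GRing.Theory Num.Theory.
Local Open Scope ring_scope.

Lemma perm_of_uniq_tuples (T : finType) m (u v : m.-tuple T) :
  uniq u -> uniq v -> exists p : {perm T}, forall i, tnth v i = p (tnth u i).
Proof.
move=> uu uv.
have m_le : (m <= #|T|)%N by rewrite -[m](size_tuple u) -(card_uniqP uu) max_card.
have tr := ntransitive_weak m_le (Sym_trans T).
have dtuple_setT (w : m.-tuple T) : uniq w -> w \in m.-dtuple(setT).
  by rewrite inE => ->; apply/subsetP.
have [p _ ->] := atransP2 tr (dtuple_setT u uu) (dtuple_setT v uv).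
by exists p => i; rewrite tnth_map.
Qed.

Lemma lin2_eq0 (F : fieldType) (a b c d x y : F) : a * d != b * c ->
  x * a + y * b = 0 -> x * c + y * d = 0 -> x = 0 /\ y = 0.
Proof.
rewrite -subr_eq0 => /negbTE det_neq0 e1 e2.
have x_det : x * (a * d - b * c) = d * (x * a + y * b) - b * (x * c + y * d) by ring.
have y_det : y * (a * d - b * c) = a * (x * c + y * d) - c * (x * a + y * b) by ring.
rewrite e1 e2 !mulr0 subrr in x_det y_det.
by move/eqP: x_det; move/eqP: y_det; rewrite !mulf_eq0 det_neq0 !orbF => /eqP-> /eqP->.
Qed.

Lemma comb2_change_basis (R : realFieldType) (p q r u x y : R) :
  0 < p -> 0 < q -> 0 < r -> 0 < u ->
  exists c d : R,
    (forall a b, x * a + y * b = c * (p * a + q * b) + d * (r * a - u * b)) /\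
    (c = 0 -> d = 0 -> x = 0 /\ y = 0).
Proof.
move=> p_gt0 q_gt0 r_gt0 u_gt0.
have det_gt0 : 0 < p * u + q * r by rewrite addr_gt0 // mulr_gt0.
exists ((x * u + y * r) / (p * u + q * r)), ((x * q - y * p) / (p * u + q * r)).
split=> [a b | /eqP c0 /eqP d0]; first by field; rewrite gt_eqF.
move: c0 d0; rewrite !mulf_eq0 invr_eq0 (gt_eqF det_gt0) !orbF => /eqP c0 /eqP d0.
apply: (@lin2_eq0 _ u r q (- p)) => //; last by rewrite mulrN.
by rewrite mulrN eq_sym -subr_eq0 opprK gt_eqF // addr_gt0 // mulr_gt0.
Qed.

Section PermutationMoments.
Variables (R : realFieldType) (n : nat).
Implicit Types f g : 'S_n -> R.

Lemma eq_Eperm f g : f =1 g -> Eperm f = Eperm g.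
Proof. by move=> fg; rewrite /Eperm; congr (_ * _); apply: eq_bigr. Qed.

Lemma EpermD f g : Eperm (fun s => f s + g s) = Eperm f + Eperm g.
Proof. by rewrite /Eperm big_split mulrDr. Qed.

Lemma EpermZ a f : Eperm (fun s => a * f s) = a * Eperm f.
Proof. by rewrite /Eperm -mulr_sumr mulrCA. Qed.

Lemma Eperm_cst (c : R) : Eperm (fun _ : 'S_n => c) = c.
Proof.
rewrite /Eperm sumr_const card_Sn -[c *+ _]mulr_natr mulrC mulfK //.
by rewrite pnatr_eq0 -lt0n fact_gt0.
Qed.

Lemma Eperm_sum (I : finType) (P : pred I) (F : I -> 'S_n -> R) :
  Eperm (fun s => \sum_(i | P i) F i s) = \sum_(i | P i) Eperm (F i).
Proof. by rewrite /Eperm exchange_big mulr_sumr. Qed.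

Lemma Eperm_mull p f : Eperm (fun s => f (p * s)%g) = Eperm f.
Proof. by rewrite /Eperm [in RHS](reindex_inj (mulgI p)). Qed.

Lemma covpE f g : covp f g = Eperm (fun s => f s * g s) - Eperm f * Eperm g.
Proof.
rewrite /covp (@eq_Eperm _ (fun s => f s * g s + (- Eperm g * f s
  + (- Eperm f * g s + Eperm f * Eperm g)))) => [|s]; last by ring.
by rewrite !EpermD Eperm_cst !EpermZ; ring.
Qed.

Lemma covpC f g : covp f g = covp g f.
Proof.
rewrite !covpE mulrC; congr (_ - _).
by apply: eq_Eperm => s; rewrite mulrC.
Qed.

Lemma eq_covp f f' g g' : f =1 f' -> g =1 g' -> covp f g = covp f' g'.
Proof.
move=> ff' gg'; rewrite !covpE (eq_Eperm ff') (eq_Eperm gg').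
by congr (_ - _); apply: eq_Eperm => s; rewrite ff' gg'.
Qed.

Lemma covpDl f f' g : covp (fun s => f s + f' s) g = covp f g + covp f' g.
Proof.
rewrite !covpE EpermD (@eq_Eperm _ (fun s => f s * g s + f' s * g s)) => [|s].
  by rewrite EpermD; ring.
by rewrite mulrDl.
Qed.

Lemma covpZl a f g : covp (fun s => a * f s) g = a * covp f g.
Proof.
rewrite !covpE EpermZ (@eq_Eperm _ (fun s => a * (f s * g s))) => [|s].
  by rewrite EpermZ; ring.
by rewrite mulrA.
Qed.

Lemma covpZr a f g : covp f (fun s => a * g s) = a * covp f g.
Proof. by rewrite covpC covpZl covpC. Qed.

Lemma covp_lin2r a b f g1 g2 :
  covp f (fun s => a * g1 s + b * g2 s) = a * covp f g1 + b * covp f g2.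
Proof. by rewrite covpC covpDl !covpZl (covpC g1) (covpC g2). Qed.

Lemma covp_cstl (c : R) g : covp (fun _ : 'S_n => c) g = 0.
Proof. by rewrite covpE Eperm_cst EpermZ subrr. Qed.

Lemma covp_suml (I : finType) (P : pred I) (F : I -> 'S_n -> R) g :
  covp (fun s => \sum_(i | P i) F i s) g = \sum_(i | P i) covp (F i) g.
Proof.
rewrite covpE Eperm_sum mulr_suml.
rewrite (@eq_Eperm _ (fun s => \sum_(i | P i) F i s * g s)) => [|s].
  by rewrite Eperm_sum -sumrB; apply: eq_bigr => i _; rewrite covpE.
by rewrite mulr_suml.
Qed.

Lemma covp_sumr (I : finType) (P : pred I) (F : I -> 'S_n -> R) g :
  covp g (fun s => \sum_(i | P i) F i s) = \sum_(i | P i) covp g (F i).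
Proof. by rewrite covpC covp_suml; apply: eq_bigr => i _; apply: covpC. Qed.

Lemma covp_mull p f g : covp (fun s => f (p * s)%g) (fun s => g (p * s)%g) = covp f g.
Proof. by rewrite !covpE !Eperm_mull (Eperm_mull p (fun s => f s * g s)). Qed.

Lemma covp_pair_coef_eq0 f1 f2 g c1 c2 :
  varp f1 * varp f2 != covp f1 f2 ^+ 2 -> covp g f1 = 0 -> covp g f2 = 0 ->
  covp (fun s => c1 * f1 s + c2 * f2 s + g s) f1 = 0 ->
  covp (fun s => c1 * f1 s + c2 * f2 s + g s) f2 = 0 -> c1 = 0 /\ c2 = 0.
Proof.
move=> gram g_f1 g_f2; rewrite !covpDl !covpZl g_f1 g_f2 !addr0 => e1 e2.
by apply: lin2_eq0 e1 e2; rewrite (covpC f2) -expr2.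
Qed.

Lemma covp_gram_unitmx m (A : 'I_m -> 'S_n -> R) :
  (forall v : 'I_m -> R,
     (forall l, covp (fun s => \sum_k v k * A k s) (A l) = 0) -> forall k, v k = 0) ->
  \matrix_(k, l) covp (A k) (A l) \in unitmx.
Proof.
move=> indep; rewrite unitmxE unitfE; apply/negP => /det0P[v /negP v_neq0 vA0].
apply: v_neq0; apply/eqP/rowP => k; rewrite mxE; apply: (indep (v ord0)) => l.
have := congr1 (fun M : 'M[R]_(1, m) => M ord0 l) vA0; rewrite !mxE => vA0l.
rewrite covp_suml -[RHS]vA0l; apply: eq_bigr => j _; by rewrite mxE covpZl.
Qed.

End PermutationMoments.

Lemma sum_indicator_mul (R : nzRingType) m (k : 'I_m) (G : 'I_m -> R) :
  \sum_i (k == i)%:R * G i = G k.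
Proof.
rewrite (bigD1 k) //= eqxx mul1r big1 ?addr0 // => i.
by rewrite eq_sym => /negbTE ->; rewrite mul0r.
Qed.

Lemma sumr_neq (R : zmodType) m (i : 'I_m) (F : 'I_m -> R) :
  \sum_(j | j != i) F j = \sum_j F j - F i.
Proof. by rewrite [\sum_j F j](bigD1 i) //= addrC addrK. Qed.

Lemma sum_ord_ltn (R : nzRingType) m t : (t <= m)%N ->
  \sum_(j < m) ((j < t)%N%:R : R) = t%:R.
Proof.
move=> t_le_m; rewrite -(big_mkord xpredT (fun j => (j < t)%N%:R)).
rewrite (@big_cat_nat _ _ _ t) //= (@eq_big_nat _ _ _ 0 t _ (fun=> 1)).
  rewrite (@eq_big_nat _ _ _ t m _ (fun=> 0)) => [|j /andP[t_le_j _]].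
    by rewrite !sumr_const_nat mul0rn addr0 subn0.
  by rewrite ltnNge t_le_j.
by move=> j /andP[_ ->].
Qed.

Lemma sum_ord_geq (R : nzRingType) m t : (t <= m)%N ->
  \sum_(j < m) ((t <= j)%N%:R : R) = (m - t)%:R.
Proof.
move=> t_le_m; rewrite (eq_bigr (fun j : 'I_m => 1 - (j < t)%N%:R)) => [|j _].
  by rewrite sumrB sum_ord_ltn // sumr_const card_ord natrB.
by rewrite leqNgt; case: (j < t)%N; rewrite ?subr0 ?subrr.
Qed.

Section OffDiagonalSums.
Variables (R : comNzRingType) (n : nat).
Implicit Types w G : 'I_n -> 'I_n -> R.

Lemma sum_offdiag_swap G :
  \sum_i \sum_(j | j != i) G i j = \sum_j \sum_(i | i != j) G i j.
Proof.
under eq_bigr => i _ do rewrite big_mkcond.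
rewrite exchange_big; apply: eq_bigr => j _; rewrite [RHS]big_mkcond /=.
by apply: eq_bigr => i _; rewrite eq_sym.
Qed.

Lemma sum_offdiag_pattern w c X Y1 Y2 k :
  (forall i, \sum_(j | j != i) w i j = c) -> (forall j, \sum_(i | i != j) w i j = c) ->
  \sum_i \sum_(j | j != i) w i j * (X + (k == i)%:R * (Y1 - X) + (k == j)%:R * (Y2 - X))
  = c * (Y1 + Y2 + (n%:R - 2) * X).
Proof.
move=> row_sum col_sum.
rewrite (eq_bigr (fun i => X * \sum_(j | j != i) w i j
  + (Y1 - X) * ((k == i)%:R * \sum_(j | j != i) w i j)
  + (Y2 - X) * \sum_(j | j != i) (k == j)%:R * w i j)) => [|i _]; last first.
  by rewrite !mulr_sumr -!big_split; apply: eq_bigr => j _ /=; ring.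
rewrite !big_split /= -!mulr_sumr.
have -> : \sum_i \sum_(j | j != i) w i j = n%:R * c.
  by rewrite (eq_bigr (fun=> c)) // sumr_const card_ord mulr_natl.
rewrite (eq_bigr (fun i => (k == i)%:R * c)) => [|i _]; last by rewrite row_sum.
rewrite sum_indicator_mul sum_offdiag_swap (eq_bigr (fun j => (k == j)%:R * c)) => [|j _].
  by rewrite sum_indicator_mul; ring.
by rewrite -mulr_sumr col_sum.
Qed.

Lemma sum_offdiag_sym_split G (e : 'I_n -> R) :
  \sum_i \sum_(j | j != i) G i j * (e i + e j)
  = \sum_k e k * \sum_(b | b != k) (G k b + G b k).
Proof.
rewrite (eq_bigr (fun i => \sum_(j | j != i) e i * G i j
  + \sum_(j | j != i) e j * G i j)) => [|i _]; last first.
  by rewrite -big_split; apply: eq_bigr => j _ /=; ring.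
rewrite big_split /= [X in _ + X]sum_offdiag_swap -big_split /=.
by apply: eq_bigr => k _; rewrite big_split mulrDr !mulr_sumr.
Qed.
End OffDiagonalSums.

Section SiteCovariance.
Variables (R : realFieldType) (n : nat) (K : 'M[R]_n) (phi : 'I_n -> R).

Definition site_cov (i j k : 'I_n) : R :=
  covp (fun s : 'S_n => K (s i) (s j)) (fun s => phi (s k)).

Lemma site_cov_perm (p : 'S_n) i j k : site_cov (p i) (p j) (p k) = site_cov i j k.
Proof.
rewrite /site_cov -(covp_mull p (fun s : 'S_n => K (s i) (s j)) (fun s => phi (s k))).
by apply: eq_covp => s; rewrite !permM.
Qed.

Lemma site_cov_pattern i j k i' j' k' : i != j -> i' != j' ->
  (k == i) = (k' == i') -> (k == j) = (k' == j') -> site_cov i j k = site_cov i' j' k'.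
Proof.
move=> nij nij' eki ekj.
have pair_to_pair : exists p : 'S_n, i' = p i /\ j' = p j.
  have uniq_ij (a b : 'I_n) : a != b -> uniq [tuple a; b] by rewrite /= inE andbT.
  have [p Hp] := perm_of_uniq_tuples (uniq_ij _ _ nij) (uniq_ij _ _ nij').
  by exists p; split; [apply: (Hp ord0) | apply: (Hp (lift ord0 ord0))].
case: (eqVneq k i) eki => [-> /esym/eqP -> | nki eki].
  by have [p [-> ->]] := pair_to_pair; rewrite site_cov_perm.
case: (eqVneq k j) ekj => [-> /esym/eqP -> | nkj ekj].
  by have [p [-> ->]] := pair_to_pair; rewrite site_cov_perm.
have uniq_ijk : uniq [tuple i; j; k].
  by rewrite /= !inE negb_or nij eq_sym nki eq_sym nkj.
have uniq_ijk' : uniq [tuple i'; j'; k'].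
  by rewrite /= !inE negb_or nij' eq_sym -eki eq_sym -ekj.
have [p Hp] := perm_of_uniq_tuples uniq_ijk uniq_ijk'.
have -> : i' = p i := Hp ord0.
have -> : j' = p j := Hp (lift ord0 ord0).
have -> : k' = p k := Hp (lift ord0 (lift ord0 ord0)).
by rewrite site_cov_perm.
Qed.

Lemma site_cov_sum i j : \sum_k site_cov i j k = 0.
Proof.
rewrite /site_cov -covp_sumr covpC.
rewrite (@eq_covp _ _ _ (fun _ => \sum_k phi k) _ (fun s => K (s i) (s j))) //.
  exact: covp_cstl.
by move=> s; rewrite [in RHS](reindex_inj (@perm_inj _ s)).
Qed.

Lemma site_cov_decomposition : (3 <= n)%N ->
  exists X Y1 Y2 : R, Y1 + Y2 + (n%:R - 2) * X = 0 /\
    forall i j k, j != i ->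
      site_cov i j k = X + (k == i)%:R * (Y1 - X) + (k == j)%:R * (Y2 - X).
Proof.
move=> n_ge3.
pose i0 : 'I_n := Ordinal (leq_trans (isT : (0 < 3)%N) n_ge3).
pose j0 : 'I_n := Ordinal (leq_trans (isT : (1 < 3)%N) n_ge3).
pose k0 : 'I_n := Ordinal (leq_trans (isT : (2 < 3)%N) n_ge3).
exists (site_cov i0 j0 k0), (site_cov i0 j0 i0), (site_cov i0 j0 j0).
set X := site_cov i0 j0 k0; set Y1 := site_cov i0 j0 i0; set Y2 := site_cov i0 j0 j0.
have pattern i j k : j != i ->
    site_cov i j k = X + (k == i)%:R * (Y1 - X) + (k == j)%:R * (Y2 - X).
  rewrite eq_sym => nij; case: (eqVneq k i) => [-> | nki].
    rewrite (negbTE nij) (@site_cov_pattern _ _ _ i0 j0 i0) ?eqxx ?(negbTE nij) //.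
    by rewrite -/Y1 /=; ring.
  case: (eqVneq k j) => [-> | nkj].
    rewrite (@site_cov_pattern _ _ _ i0 j0 j0) ?eqxx //; last first.
      by rewrite eq_sym (negbTE nij).
    by rewrite -/Y2 /=; ring.
  rewrite (@site_cov_pattern _ _ _ i0 j0 k0) ?(negbTE nki) ?(negbTE nkj) //.
  by rewrite -/X /=; ring.
split=> //; have := site_cov_sum i0 j0.
rewrite (eq_bigr (fun k => X + (i0 == k)%:R * (Y1 - X) + (j0 == k)%:R * (Y2 - X)));
  last by move=> k _; rewrite pattern // ![_ == k]eq_sym.
rewrite !big_split /= !sum_indicator_mul sumr_const card_ord.
by rewrite -mulr_natr => <-; ring.
Qed.

Lemma covp_offdiag_site (w : 'I_n -> 'I_n -> R) c k : (3 <= n)%N ->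
  (forall i, \sum_(j | j != i) w i j = c) -> (forall j, \sum_(i | i != j) w i j = c) ->
  covp (fun s : 'S_n => \sum_i \sum_(j | j != i) w i j * K (s i) (s j))
       (fun s => phi (s k)) = 0.
Proof.
move=> n_ge3 row_sum col_sum.
have [X [Y1 [Y2 [sum_eq0 pattern]]]] := site_cov_decomposition n_ge3.
rewrite covp_suml (eq_bigr (fun i => \sum_(j | j != i) w i j * site_cov i j k)) => [|i _].
  under eq_bigr => i _ do under eq_bigr => j nji do rewrite pattern //.
  by rewrite (sum_offdiag_pattern _ _ _ _ row_sum col_sum) sum_eq0 mulr0.
by rewrite covp_suml; apply: eq_bigr => j _; rewrite covpZl.
Qed.

End SiteCovariance.

Section Statistics.
Variables (R : realFieldType) (n t : nat).
Hypotheses (t_ge2 : (2 <= t)%N) (t_le : (t <= n - 2)%N).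

Local Notation WS K := (fun s : 'S_n => Wstat (permute_kernel K s) t).
Local Notation DS K := (fun s : 'S_n => Dstat (permute_kernel K s) t).
Local Notation alphaS K := (fun s : 'S_n => alpha (permute_kernel K s) t).
Local Notation betaS K := (fun s : 'S_n => beta (permute_kernel K s) t).

Let t_le_n : (t <= n)%N. Proof. lia. Qed.

Let natr_neq0 m : (0 < m)%N -> (m%:R : R) != 0.
Proof. by rewrite pnatr_eq0 -lt0n. Qed.

Definition W_weight (i j : 'I_n) : R :=
  ((i < t)%N && (j < t)%N)%:R / (n * (t - 1))%:R
  + ((t <= i)%N && (t <= j)%N)%:R / (n * (n - t - 1))%:R.

Lemma Wstat_offdiag (K : 'M[R]_n) (s : 'S_n) :
  Wstat (permute_kernel K s) t = \sum_i \sum_(j | j != i) W_weight i j * K (s i) (s j).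
Proof.
have coef_lt : t%:R / n%:R * (t * (t - 1))%:R^-1 = (n * (t - 1))%:R^-1 :> R.
  by rewrite !natrM; field; rewrite !natr_neq0 //; lia.
have coef_ge : (n - t)%:R / n%:R * ((n - t) * (n - t - 1))%:R^-1
    = (n * (n - t - 1))%:R^-1 :> R.
  by rewrite !natrM; field; rewrite !natr_neq0 //; lia.
rewrite /Wstat /alpha /beta !mulrA coef_lt coef_ge !mulr_sumr -big_split.
apply: eq_bigr => i _; rewrite !mulr_sumr -big_split; apply: eq_bigr => j _ /=.
by rewrite mxE /W_weight; ring.
Qed.

Lemma W_weight_row (i : 'I_n) : \sum_(j | j != i) W_weight i j = n%:R^-1.
Proof.
rewrite sumr_neq; case: (ltnP i t) => [i_lt_t | t_le_i].
  rewrite (eq_bigr (fun j : 'I_n => (j < t)%N%:R / (n * (t - 1))%:R)) => [|j _]; last first.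
    by rewrite /W_weight i_lt_t (leqNgt t i) i_lt_t /= mul0r addr0.
  rewrite -mulr_suml sum_ord_ltn // /W_weight i_lt_t (leqNgt t i) i_lt_t /=.
  have -> : (t%:R : R) = (t - 1)%:R + 1 by rewrite natr1; congr _%:R; lia.
  by rewrite mul0r addr0 natrM; field; rewrite !natr_neq0 //; lia.
rewrite (eq_bigr (fun j : 'I_n => (t <= j)%N%:R / (n * (n - t - 1))%:R)) => [|j _]; last first.
  by rewrite /W_weight t_le_i (ltnNge i t) t_le_i /= mul0r add0r.
rewrite -mulr_suml sum_ord_geq // /W_weight t_le_i (ltnNge i t) t_le_i /=.
have -> : ((n - t)%:R : R) = (n - t - 1)%:R + 1 by rewrite natr1; congr _%:R; lia.
by rewrite mul0r add0r natrM; field; rewrite !natr_neq0 //; lia.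
Qed.

Lemma W_weight_col (j : 'I_n) : \sum_(i | i != j) W_weight i j = n%:R^-1.
Proof.
rewrite -(W_weight_row j); apply: eq_bigr => i _.
by rewrite /W_weight andbC [(t <= i)%N && _]andbC.
Qed.

Definition site_weight (k : 'I_n) : R := (k < t)%N%:R - 2^-1.

Definition kernel_degree (K : 'M[R]_n) (a : 'I_n) : R := \sum_(b | b != a) (K a b + K b a).

Lemma indicator_diff_split (i j : 'I_n) :
  ((i < t)%N && (j < t)%N)%:R - ((t <= i)%N && (t <= j)%N)%:R
  = site_weight i + site_weight j :> R.
Proof.
rewrite /site_weight (leqNgt t i) (leqNgt t j).
by case: (i < t)%N; case: (j < t)%N => /=; field.
Qed.

Lemma Dstat_sites (K : 'M[R]_n) (s : 'S_n) :
  Dstat (permute_kernel K s) t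
  = (n * (n - 1))%:R^-1 * \sum_k site_weight k * kernel_degree K (s k).
Proof.
have coef_lt : (t * (t - 1))%:R / (n * (n - 1))%:R * (t * (t - 1))%:R^-1
    = (n * (n - 1))%:R^-1 :> R.
  by rewrite mulrAC divff ?mul1r // natr_neq0 // muln_gt0; lia.
have coef_ge : ((n - t) * (n - t - 1))%:R / (n * (n - 1))%:R
    * ((n - t) * (n - t - 1))%:R^-1 = (n * (n - 1))%:R^-1 :> R.
  by rewrite mulrAC divff ?mul1r // natr_neq0 // muln_gt0; lia.
rewrite /Dstat /alpha /beta !mulrA coef_lt coef_ge -mulrBr -sumrB.
congr (_ * _); under eq_bigr => i _ do rewrite -sumrB.
rewrite (eq_bigr (fun i => \sum_(j | j != i) K (s i) (s j)
  * (site_weight i + site_weight j))) => [|i _]; last first.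
  by apply: eq_bigr => j _; rewrite mxE -mulrBr indicator_diff_split.
rewrite sum_offdiag_sym_split; apply: eq_bigr => k _; congr (_ * _).
rewrite /kernel_degree [in RHS](reindex_inj (@perm_inj _ s)) /=.
by apply: eq_bigl => j; rewrite (inj_eq (@perm_inj _ s)).
Qed.

Lemma covp_Wstat_Dstat (K K' : 'M[R]_n) : covp (WS K) (DS K') = 0.
Proof.
rewrite (eq_covp (Wstat_offdiag K) (Dstat_sites K')) covpZr covp_sumr big1 ?mulr0 // => k _.
have n_ge3 : (3 <= n)%N by lia.
by rewrite covpZr (covp_offdiag_site _ _ _ n_ge3 W_weight_row W_weight_col) mulr0.
Qed.

Lemma alpha_beta_comb_eq0 (K1 K2 : 'M[R]_n) (X : 'S_n -> R) (x1 y1 x2 y2 : R) :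
  varp (WS K1) * varp (WS K2) != covp (WS K1) (WS K2) ^+ 2 ->
  varp (DS K1) * varp (DS K2) != covp (DS K1) (DS K2) ^+ 2 ->
  (forall s, X s = x1 * alpha (permute_kernel K1 s) t + y1 * beta (permute_kernel K1 s) t
    + x2 * alpha (permute_kernel K2 s) t + y2 * beta (permute_kernel K2 s) t) ->
  covp X (alphaS K1) = 0 -> covp X (betaS K1) = 0 ->
  covp X (alphaS K2) = 0 -> covp X (betaS K2) = 0 ->
  [/\ x1 = 0, y1 = 0, x2 = 0 & y2 = 0].
Proof.
move=> gramW gramD X_ab Xa1 Xb1 Xa2 Xb2.
pose p : R := t%:R / n%:R; pose q : R := (n - t)%:R / n%:R.
pose r : R := (t * (t - 1))%:R / (n * (n - 1))%:R.
pose u : R := ((n - t) * (n - t - 1))%:R / (n * (n - 1))%:R.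
have [p_gt0 q_gt0] : 0 < p /\ 0 < q by split; rewrite divr_gt0 ?ltr0n //; lia.
have [r_gt0 u_gt0] : 0 < r /\ 0 < u by split; rewrite divr_gt0 ?ltr0n ?muln_gt0 //; lia.
have [c1 [d1 [X1_WD coef1_eq0]]] := comb2_change_basis x1 y1 p_gt0 q_gt0 r_gt0 u_gt0.
have [c2 [d2 [X2_WD coef2_eq0]]] := comb2_change_basis x2 y2 p_gt0 q_gt0 r_gt0 u_gt0.
have X_WD s : X s = c1 * WS K1 s + c2 * WS K2 s + (d1 * DS K1 s + d2 * DS K2 s).
  by rewrite X_ab -addrA X1_WD X2_WD /Wstat /Dstat -/p -/q -/r -/u; ring.
have X_W K : covp X (alphaS K) = 0 -> covp X (betaS K) = 0 -> covp X (WS K) = 0.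
  by move=> Xa Xb; have := covp_lin2r p q X (alphaS K) (betaS K); rewrite Xa Xb !mulr0 addr0.
have X_D K : covp X (alphaS K) = 0 -> covp X (betaS K) = 0 -> covp X (DS K) = 0.
  move=> Xa Xb; have := covp_lin2r r (- u) X (alphaS K) (betaS K).
  by rewrite Xa Xb !mulr0 addr0 => <-; apply: eq_covp => // s; rewrite mulNr.
have [c1_eq0 c2_eq0] : c1 = 0 /\ c2 = 0.
  apply: (covp_pair_coef_eq0 (g := fun s => d1 * DS K1 s + d2 * DS K2 s) gramW).
  - by rewrite covpDl !covpZl !(covpC (DS _)) !covp_Wstat_Dstat !mulr0 addr0.
  - by rewrite covpDl !covpZl !(covpC (DS _)) !covp_Wstat_Dstat !mulr0 addr0.
  - by rewrite -(eq_covp X_WD (frefl _)) X_W.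
  - by rewrite -(eq_covp X_WD (frefl _)) X_W.
have [d1_eq0 d2_eq0] : d1 = 0 /\ d2 = 0.
  apply: (covp_pair_coef_eq0 (g := fun s => c1 * WS K1 s + c2 * WS K2 s) gramD).
  - by rewrite covpDl !covpZl !covp_Wstat_Dstat !mulr0 addr0.
  - by rewrite covpDl !covpZl !covp_Wstat_Dstat !mulr0 addr0.
  - by rewrite -(X_D K1) // (eq_covp X_WD (frefl _)); apply: eq_covp => // s; ring.
  - by rewrite -(X_D K2) // (eq_covp X_WD (frefl _)); apply: eq_covp => // s; ring.
have [x1_eq0 y1_eq0] := coef1_eq0 c1_eq0 d1_eq0.
by have [x2_eq0 y2_eq0] := coef2_eq0 c2_eq0 d2_eq0.
Qed.
End Statistics.

Unset Implicit Arguments.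
Theorem theorem2 (R : realFieldType) (n : nat) (K1 K2 : 'M[R]_n) (t : nat) :
  (4 <= n)%N -> (2 <= t)%N -> (t <= n - 2)%N ->
  K1^T = K1 -> K2^T = K2 ->
  let W1 := fun s => Wstat (permute_kernel K1 s) t in
  let W2 := fun s => Wstat (permute_kernel K2 s) t in
  let D1 := fun s => Dstat (permute_kernel K1 s) t in
  let D2 := fun s => Dstat (permute_kernel K2 s) t in
  varp W1 * varp W2 != covp W1 W2 ^+ 2 ->
  varp D1 * varp D2 != covp D1 D2 ^+ 2 ->
  varp (fun s => D1 s + D2 s) != 0 ->
  varp (fun s => W1 s + W2 s) != 0 ->
  Sigma K1 K2 t \in unitmx.
Proof.
move=> _ t_ge2 t_le _ _ W1 W2 D1 D2 gramW gramD _ _.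
apply: covp_gram_unitmx => v orth.
pose i1 : 'I_4 := lift ord0 ord0; pose i2 : 'I_4 := lift ord0 (lift ord0 ord0).
pose i3 : 'I_4 := lift ord0 (lift ord0 (lift ord0 ord0)).
have sum_avec s : \sum_k v k * avec K1 K2 t s k ord0
    = v ord0 * alpha (permute_kernel K1 s) t + v i1 * beta (permute_kernel K1 s) t
      + v i2 * alpha (permute_kernel K2 s) t + v i3 * beta (permute_kernel K2 s) t.
  by rewrite !big_ord_recl big_ord0 addr0 !addrA !mxE.
have orth_at l (F : 'S_n -> R) : (fun s => avec K1 K2 t s l ord0) =1 F ->
    covp (fun s => \sum_k v k * avec K1 K2 t s k ord0) F = 0.
  by move=> lF; rewrite -(eq_covp (frefl _) lF).
have [] := alpha_beta_comb_eq0 t_ge2 t_le gramW gramD sum_avec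
  (orth_at ord0 _ (fun s => mxE _ _ _ _)) (orth_at i1 _ (fun s => mxE _ _ _ _))
  (orth_at i2 _ (fun s => mxE _ _ _ _)) (orth_at i3 _ (fun s => mxE _ _ _ _)).
move=> v0 v1 v2 v3 [[|[|[|[|//]]]] k_lt];
  [rewrite -v0 | rewrite -v1 | rewrite -v2 | rewrite -v3]; by congr v; apply: val_inj.
Qed.
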